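(* Let $k\ge 2$ and $2\le r\le k$ be integers, let $T=3^{k-r+1}$ and $M=3^{r-1}$, and let $S=(\mathcal{P},\mathcal{B})$ be a Steiner triple system on $|\mathcal{P}|=3^k$ points whose $3$-rank is at most $3^k-r$. Fix a decomposition of $S$ of the form described in the context (groups $G_x$, $x\in AG(r-1,3)$, sub-systems $\mathcal{B}_x$ and transversal designs $\mathcal{B}_\ell$). Suppose that (i) for every point $x$ of $AG(r-1,3)$, the Steiner triple system $(G_x,\mathcal{B}_x)$ on $T$ points is resolvable, and (ii) for every line $\ell$ of $AG(r-1,3)$, the Latin square of order $T$ corresponding to the transversal design $\mathcal{B}_\ell$ has an orthogonal mate. Then $S$ is resolvable, i.e. $\mathcal{B}$ can be partitioned into $\frac{3^k-1}{2}$ parallel classes.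
   Context: A Steiner triple system $STS(v)$ is a pair $(\mathcal{P},\mathcal{B})$ with $|\mathcal{P}|=v$ and $\mathcal{B}$ a set of $3$-subsets (blocks) of $\mathcal{P}$ such that every $2$-subset of $\mathcal{P}$ lies in exactly one block. Its $3$-rank is the rank over $\mathbb{F}_3$ of its block–point incidence matrix. A parallel class is a subset of $\mathcal{B}$ whose blocks partition $\mathcal{P}$; $S$ is resolvable if $\mathcal{B}$ can be partitioned into parallel classes. A transversal design $TD[3;T]$ on three pairwise disjoint groups $H_1,H_2,H_3$ of size $T$ is a set of $T^2$ triples $\{a,b,c\}$ with $a\in H_1,b\in H_2,c\in H_3$ such that every pair of points from two distinct groups lies in exactly one triple; equivalently it is a Latin square of order $T$ (rows indexed by $H_1$, columns by $H_2$, symbols by $H_3$). Two Latin squares of order $n$ are orthogonal if superimposing them yields each ordered pair of symbols exactly once; an orthogonal mate of a Latin square is a Latin square orthogonal to it. Decomposition (from the cited structure theorem of Jungnickel et al. for non-full-3-rank STS, used here as the standing setup): if $S$ is an $STS(3^k)$ of $3$-rank at most $3^k-r$, then the point set $\mathcal{P}$ is partitioned into $M=3^{r-1}$ groups $G_x$ of size $T=3^{k-r+1}$, indexed by the points $x$ of the affine geometry $AG(r-1,3)$, and the block set splits as $\mathcal{B}=\bigcup_x \mathcal{B}_x\ \cup\ \bigcup_\ell \mathcal{B}_\ell$, where for each point $x$, $(G_x,\mathcal{B}_x)$ is an $STS(T)$, and for each line $\ell=\{x,y,z\}$ of $AG(r-1,3)$, $\mathcal{B}_\ell$ is a set of $T^2$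 blocks forming a transversal design $TD[3;T]$ on the three groups $G_x,G_y,G_z$. *)

From HB Require Import structures.
From mathcomp Require Import all_boot all_order all_algebra.
Set Implicit Arguments. Unset Strict Implicit. Unset Printing Implicit Defensive.
Import GRing.Theory.

Section Defs.
Variable P : finType.

Definition is_STS (Pts : {set P}) (Bl : {set {set P}}) : Prop :=
  (forall b, b \in Bl -> b \subset Pts /\ #|b| = 3) /\
  (forall u v, u \in Pts -> v \in Pts -> u != v ->
     #|[set b in Bl | (u \in b) && (v \in b)]| = 1).

Definition parallel_class (Pts : {set P}) (Bl C : {set {set P}}) : bool :=
  (C \subset Bl) && partition C Pts.

Definition resolution (Pts : {set P}) (Bl : {set {set P}})
    (Q : {set {set {set P}}}) : bool :=
  partition Q Bl && [forall C in Q, parallel_class Pts Bl C].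

Definition resolvable (Pts : {set P}) (Bl : {set {set P}}) : Prop :=
  exists Q, resolution Pts Bl Q.

Definition is_TD (T : nat) (G1 G2 G3 : {set P}) (Bl : {set {set P}}) : Prop :=
  (#|G1| = T /\ #|G2| = T /\ #|G3| = T) /\
  ([disjoint G1 & G2] && [disjoint G1 & G3] && [disjoint G2 & G3]) /\
      (forall b, b \in Bl ->
         [/\ b \subset G1 :|: G2 :|: G3, #|b :&: G1| = 1, #|b :&: G2| = 1
           & #|b :&: G3| = 1]) /\
      (forall (i j : 'I_3) u v, i != j ->
         u \in nth G1 [:: G1; G2; G3] i -> v \in nth G1 [:: G1; G2; G3] j ->
         #|[set b in Bl | (u \in b) && (v \in b)]| = 1).

(* The Latin square L of the TD Bl has rows G1, columns G2, symbols G3: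
   L(a,b) = c  iff  {a,b,c} is a block.  An orthogonal mate is a Latin square
   L' on rows G1, columns G2 (symbols taken in G3, a set of the right size)
   such that superimposing L and L' gives each ordered pair of symbols exactly
   once; since there are T^2 cells and T^2 ordered pairs this is injectivity of
   (a,b) |-> (L(a,b), L'(a,b)). *)
Definition has_orthogonal_mate (G1 G2 G3 : {set P}) (Bl : {set {set P}}) : Prop :=
  exists L' : P -> P -> P,
    [/\ (forall a b, a \in G1 -> b \in G2 -> L' a b \in G3),
        (forall a b b', a \in G1 -> b \in G2 -> b' \in G2 ->
            L' a b = L' a b' -> b = b'),
        (forall a a' b, a \in G1 -> a' \in G1 -> b \in G2 ->
            L' a b = L' a' b -> a = a') &
        (forall a a' b b' c, a \in G1 -> a' \in G1 -> b \in G2 -> b' \in G2 ->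
            [set a; b; c] \in Bl -> [set a'; b'; c] \in Bl ->
            L' a b = L' a' b' -> a = a' /\ b = b')].

Definition incmx (B : {set {set P}}) : 'M['F_3]_(#|B|, #|[set: P]|) :=
  \matrix_(i < #|B|, j < #|[set: P]|)
     (if enum_val j \in enum_val i then 1%R else 0%R).

Definition three_rank (B : {set {set P}}) : nat := \rank (incmx B).
End Defs.

Definition AG_line (n : nat) (l : {set 'rV['F_3]_n}) : bool :=
  [exists a : 'rV['F_3]_n, exists d : 'rV['F_3]_n,
     (d != 0)%R && (l == [set (a + t *: d)%R | t : 'F_3])].

From HB Require Import structures.
From mathcomp Require Import all_boot all_order all_algebra.
Set Implicit Arguments. Unset Strict Implicit. Unset Printing Implicit Defensive.
Import GRing.Theory.

(* We label every block:
   - a block of B_x by the rank j of its class in a fixed resolution of B_x;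
   - a block of B_l by the direction of l and (the rank of) the symbol its
     cell carries in a fixed orthogonal mate of the Latin square of B_l.
   Blocks with the same label are disjoint or equal, and every label occurs on
   a block through every point: for the first kind because all the sub-systems
   have (T-1)/2 classes, for the second because each symbol of an orthogonal
   mate picks a parallel class of the transversal design, and the lines of a
   given direction partition AG(r-1,3).  The fibres of the labelling are
   therefore a resolution, and any resolution of an STS(v) has (v-1)/2 classes. *)

Lemma trivIset_meet (T : finType) (C : {set {set T}}) (b b' : {set T}) p :
  trivIset C -> b \in C -> b' \in C -> p \in b -> p \in b' -> b = b'.
Proof.
move=> /trivIsetP tC bC b'C pb pb'; apply/eqP; apply: contraT => /(tC _ _ bC b'C).
by move/disjoint_setI0/setP/(_ p); rewrite !inE pb pb'.
Qed.

Lemma partition_of_cover (T : finType) (C : {set {set T}}) (D : {set T}) :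
  (forall b, b \in C -> b != set0 /\ b \subset D) ->
  (forall p, p \in D -> exists2 b, b \in C & p \in b) ->
  (forall p b b', b \in C -> b' \in C -> p \in b -> p \in b' -> b = b') ->
  partition C D.
Proof.
move=> sC covC meetC; apply/and3P; split.
- rewrite eqEsubset; apply/andP; split; first by apply/bigcupsP => b /sC[].
  by apply/subsetP => p /covC[b bC pb]; apply/bigcupP; exists b.
- apply/trivIsetP => b b' bC b'C; apply: contraNT; rewrite -setI_eq0.
  case/set0Pn => p; rewrite inE => /andP[pb pb'].
  by apply/eqP; apply: meetC pb pb'.
- by apply/negP => /sC[/eqP].
Qed.

(* In a resolution every class has exactly one block through a given point,
   so the classes correspond to the blocks through that point. *)
Lemma resolution_classes (T : finType) (Pts : {set T}) (Bl : {set {set T}})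
    (Q : {set {set {set T}}}) u :
  resolution Pts Bl Q -> u \in Pts -> #|Q| = #|[set b in Bl | u \in b]|.
Proof.
move=> /andP[partQ /forall_inP classQ] uP.
have coverC C : C \in Q -> u \in cover C.
  by case/classQ/andP => _ /cover_partition ->.
have inj : {in Q &, injective (fun C => pblock C u)}.
  move=> C C' CQ C'Q /= eqC; have /and3P[_ tQ _] := partQ.
  apply: (trivIset_meet (p := pblock C' u) tQ CQ C'Q) => //.
    by rewrite -eqC pblock_mem ?coverC.
  by rewrite pblock_mem ?coverC.
rewrite -(card_in_imset inj); apply: eq_card => b; apply/imsetP/idP.
  move=> [C CQ ->]; have /andP[/subsetP sC _] := classQ C CQ.
  by rewrite inE sC ?pblock_mem ?coverC // mem_pblock coverC.
rewrite inE => /andP[bB ub]; have /and3P[/eqP coverQ _ _] := partQ.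
move: bB; rewrite -coverQ => /bigcupP[C CQ bC].
exists C => //; have /andP[_ /and3P[_ tC _]] := classQ C CQ.
by rewrite (def_pblock tC bC ub).
Qed.

(* In an STS(v) every point lies on (v - 1) / 2 blocks: double count the
   pairs (v, b) with u <> v both in the block b. *)
Lemma sts_degree (T : finType) (Pts : {set T}) (Bl : {set {set T}}) u :
  is_STS Pts Bl -> u \in Pts -> #|[set b in Bl | u \in b]| * 2 = #|Pts| - 1.
Proof.
move=> [sBl pairBl] uP; set Bu := [set b in Bl | u \in b].
have countB (A : {set {set T}}) v :
    \sum_(b in A) (v \in b : nat) = #|[set b in A | v \in b]|.
  rewrite -sum1_card [RHS]big_mkcond [LHS]big_mkcond /=.
  by apply: eq_bigr => b _; rewrite inE; case: (b \in A); case: (v \in b).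
have countP (A b : {set T}) : \sum_(v in A) (v \in b : nat) = #|A :&: b|.
  rewrite -sum1_card [RHS]big_mkcond [LHS]big_mkcond /=.
  by apply: eq_bigr => v _; rewrite inE; case: (v \in A); case: (v \in b).
have pairs : #|Pts :\ u| = \sum_(v in Pts :\ u) \sum_(b in Bu) (v \in b : nat).
  rewrite -sum1_card; apply: eq_bigr => v; rewrite !inE => /andP[nv vP].
  rewrite countB -(pairBl u v uP vP); last by rewrite eq_sym.
  by apply: eq_card => b; rewrite !inE andbA.
rewrite (cardsD1 u Pts) uP add1n subSS subn0 pairs exchange_big.
rewrite /= -sum_nat_const; apply: eq_bigr => b; rewrite inE => /andP[bB ub].
have [sb cb] := sBl b bB; rewrite countP.
have -> : (Pts :\ u) :&: b = b :\ u.
  apply/setP => v; rewrite !inE; case vb: (v \in b); last by rewrite !andbF.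
  by rewrite (subsetP sb v vb) andbT.
by move: cb; rewrite (cardsD1 u b) ub add1n => -[->].
Qed.

Lemma resolution_card (T : finType) (Pts : {set T}) (Bl : {set {set T}})
    (Q : {set {set {set T}}}) u :
  is_STS Pts Bl -> resolution Pts Bl Q -> u \in Pts -> #|Q| * 2 = #|Pts| - 1.
Proof. by move=> STS res uP; rewrite (resolution_classes res uP) (sts_degree STS uP). Qed.

Lemma labelling_resolution (P : finType) (K : eqType) (B : {set {set P}})
    (key : {set P} -> K) :
  (forall b, b \in B -> b != set0) ->
  (forall b0 p, b0 \in B -> exists2 b, b \in B & key b = key b0 /\ p \in b) ->
  (forall b b' p, b \in B -> b' \in B -> key b = key b' ->
     p \in b -> p \in b' -> b = b') ->
  resolution [set: P] B (preim_partition key B).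
Proof.
move=> nonempty cover unique; apply/andP; split; first exact: preim_partitionP.
apply/forall_inP => C /imsetP[b0 b0B ->]; apply/andP; split.
  by apply/subsetP => b; rewrite inE => /andP[].
apply: partition_of_cover.
- by move=> b; rewrite inE => /andP[bB _]; rewrite nonempty ?subsetT.
- move=> p _; have [b bB [kb pb]] := cover b0 p b0B.
  by exists b; rewrite // inE bB kb eqxx.
- move=> p b b'; rewrite !inE => /andP[bB /eqP kb] /andP[b'B /eqP kb'].
  by apply: (unique b b' p) => //; rewrite -kb -kb'.
Qed.

Section AffineLines.
Local Open Scope ring_scope.
Variable n : nat.
Implicit Types (l : {set 'rV['F_3]_n}) (a d x : 'rV['F_3]_n).

(* The direction of a line: the set of differences of its points, i.e. the
   one-dimensional subspace parallel to it.  Parallel classes of lines are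
   indexed by their direction. *)
Definition direction l : {set 'rV['F_3]_n} := [set u - v | u in l, v in l].

Definition translate x (D : {set 'rV['F_3]_n}) : {set 'rV['F_3]_n} :=
  [set x + w | w in D].

Lemma direction_param a d :
  direction [set a + t *: d | t : 'F_3] = [set t *: d | t : 'F_3].
Proof.
apply/setP => w; apply/imset2P/imsetP.
  move=> [u v /imsetP[t _ ->] /imsetP[t' _ ->] ->]; exists (t - t') => //.
  by rewrite opprD addrACA subrr add0r scalerBl.
move=> [t _ ->]; exists (a + t *: d) a; last by rewrite addrC addKr.
  by apply/imsetP; exists t.
by apply/imsetP; exists 0; rewrite ?scale0r ?addr0.
Qed.

Lemma translate_param x d :
  translate x [set t *: d | t : 'F_3] = [set x + t *: d | t : 'F_3].
Proof.
apply/setP => w; apply/imsetP/imsetP.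
  by move=> [w' /imsetP[t _ ->] ->]; exists t.
by move=> [t _ ->]; exists (t *: d) => //; apply/imsetP; exists t.
Qed.

Lemma line_translate l x : AG_line l -> x \in l -> l = translate x (direction l).
Proof.
case/existsP=> a /existsP[d /andP[_ /eqP ->]] /imsetP[s _ ->].
rewrite direction_param translate_param; apply/setP => w.
apply/imsetP/imsetP => -[t _ ->].
  by exists (t - s) => //; rewrite -addrA -scalerDl [s + _]addrC subrK.
by exists (s + t) => //; rewrite scalerDl addrA.
Qed.

Lemma parallel_line l x : AG_line l ->
  [/\ AG_line (translate x (direction l)),
      direction (translate x (direction l)) = direction l
    & x \in translate x (direction l)].
Proof.
case/existsP=> a /existsP[d /andP[nd /eqP ->]].
rewrite direction_param translate_param direction_param; split => //.
  by apply/existsP; exists x; apply/existsP; exists d; rewrite nd eqxx.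
by apply/imsetP; exists 0; rewrite ?scale0r ?addr0.
Qed.

Lemma parallel_lines_eq l l' x : AG_line l -> AG_line l' ->
  direction l = direction l' -> x \in l -> x \in l' -> l = l'.
Proof.
by move=> Ll Ll' dl xl xl'; rewrite (line_translate Ll xl) (line_translate Ll' xl') dl.
Qed.

End AffineLines.

(* The point of b in A, when b meets A in exactly one point (p0 is a default). *)
Definition pt (P : finType) (p0 : P) (b A : {set P}) : P :=
  odflt p0 [pick q in b :&: A].

Lemma ptE (P : finType) (p0 : P) (b A : {set P}) a :
  b :&: A = [set a] -> pt p0 b A = a.
Proof.
move=> bA; rewrite /pt; case: pickP => [q | /(_ a)]; rewrite bA inE ?eqxx //.
by move/eqP.
Qed.

Section TransversalDesign.
Variables (P : finType) (p0 : P) (T : nat) (G1 G2 G3 : {set P}).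
Variable Bl : {set {set P}}.
Hypothesis TD : is_TD T G1 G2 G3 Bl.

Definition td_group (i : 'I_3) : {set P} := nth G1 [:: G1; G2; G3] i.

Let i1 : 'I_3 := @Ordinal 3 0 isT.
Let i2 : 'I_3 := @Ordinal 3 1 isT.
Let i3 : 'I_3 := @Ordinal 3 2 isT.

Lemma td_group_card i : #|td_group i| = T.
Proof. by have [[c1 [c2 c3]] _] := TD; case: i => -[|[|[|//]]]. Qed.

Lemma td_group_meet b i : b \in Bl -> b :&: td_group i = [set pt p0 b (td_group i)].
Proof.
move=> bBl; have [_ [_ [blocks _]]] := TD; have [_ c1 c2 c3] := blocks b bBl.
have /eqP/cards1P[a bA] : #|b :&: td_group i| = 1.
  by move: c1 c2 c3; case: i => -[|[|[|//]]].
by rewrite bA (ptE p0 bA).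
Qed.

Lemma pt_mem b i : b \in Bl ->
  pt p0 b (td_group i) \in b /\ pt p0 b (td_group i) \in td_group i.
Proof.
by move=> /(td_group_meet i) bA; apply/andP; rewrite -in_setI bA set11.
Qed.

Lemma pt_unique b i u : b \in Bl -> u \in b -> u \in td_group i ->
  u = pt p0 b (td_group i).
Proof.
by move=> /(td_group_meet i) bA ub uA; apply/set1P; rewrite -bA inE ub uA.
Qed.

Lemma td_block_points b : b \in Bl -> b = [set pt p0 b G1; pt p0 b G2; pt p0 b G3].
Proof.
move=> bBl; have [_ [_ [blocks _]]] := TD; have [sb _ _ _] := blocks b bBl.
apply/setP => u; rewrite !inE; apply/idP/idP.
  move=> ub; move: (subsetP sb u ub); rewrite !inE => /orP[/orP[]|] uG.
  - by rewrite -(pt_unique (i := i1) bBl ub uG) eqxx.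
  - by rewrite -(pt_unique (i := i2) bBl ub uG) eqxx orbT.
  - by rewrite -(pt_unique (i := i3) bBl ub uG) eqxx orbT.
by case/orP=> [/orP[]|] /eqP ->; [case: (pt_mem i1 bBl)|case: (pt_mem i2 bBl)|
                                  case: (pt_mem i3 bBl)].
Qed.

Lemma td_pair_exists i j u v : i != j -> u \in td_group i -> v \in td_group j ->
  exists2 b, b \in Bl & u \in b /\ v \in b.
Proof.
move=> ij uG vG; have [_ [_ [_ pairs]]] := TD.
have /card_gt0P[b] : 0 < #|[set b in Bl | (u \in b) && (v \in b)]|.
  by rewrite (pairs i j u v).
by rewrite inE => /and3P[bBl ub vb]; exists b.
Qed.

Lemma td_pair_unique i j u v b b' : i != j -> u \in td_group i -> v \in td_group j ->
  b \in Bl -> b' \in Bl -> u \in b -> v \in b -> u \in b' -> v \in b' -> b = b'.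
Proof.
move=> ij uG vG bBl b'Bl ub vb ub' vb'; have [_ [_ [_ pairs]]] := TD.
have /eqP/cards1P[c Ec] := pairs i j u v ij uG vG.
have : b \in [set c] by rewrite -Ec inE bBl ub vb.
have : b' \in [set c] by rewrite -Ec inE b'Bl ub' vb'.
by rewrite !inE => /eqP -> /eqP ->.
Qed.

Lemma td_block_cell b b' : b \in Bl -> b' \in Bl ->
  pt p0 b G1 = pt p0 b' G1 -> pt p0 b G2 = pt p0 b' G2 -> b = b'.
Proof.
move=> bBl b'Bl e1 e2; have [ab aG] := pt_mem i1 bBl; have [cb cG] := pt_mem i2 bBl.
have [ab' _] := pt_mem i1 b'Bl; have [cb' _] := pt_mem i2 b'Bl.
by apply: (td_pair_unique (i := i1) (j := i2) isT aG cG) => //; rewrite ?e1 ?e2.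
Qed.

(* Through a point of some group pass exactly T blocks: they correspond to
   the points of any other group. *)
Lemma blocks_through_card i j p : i != j -> p \in td_group i ->
  #|[set b in Bl | p \in b]| = T.
Proof.
move=> ij pG; set Bp := [set b in Bl | p \in b].
have inj : {in Bp &, injective (fun b => pt p0 b (td_group j))}.
  move=> b b'; rewrite !inE => /andP[bBl pb] /andP[b'Bl pb'] e.
  have [vb vG] := pt_mem j bBl; have [vb' _] := pt_mem j b'Bl.
  by apply: (td_pair_unique ij pG vG) => //; rewrite e.
rewrite -(card_in_imset inj) -(td_group_card j); congr #|pred_of_set _|.
apply/setP => v; apply/imsetP/idP.
  by case=> b; rewrite inE => /andP[bBl _] ->; case: (pt_mem j bBl).
move=> vG; have [b bBl [pb vb]] := td_pair_exists ij pG vG.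
by exists b; [rewrite inE bBl | apply: pt_unique].
Qed.

Definition orthogonal_mate (L' : P -> P -> P) : Prop :=
  [/\ (forall a b, a \in G1 -> b \in G2 -> L' a b \in G3),
      (forall a b b', a \in G1 -> b \in G2 -> b' \in G2 ->
          L' a b = L' a b' -> b = b'),
      (forall a a' b, a \in G1 -> a' \in G1 -> b \in G2 ->
          L' a b = L' a' b -> a = a') &
      (forall a a' b b' c, a \in G1 -> a' \in G1 -> b \in G2 -> b' \in G2 ->
          [set a; b; c] \in Bl -> [set a'; b'; c] \in Bl ->
          L' a b = L' a' b' -> a = a' /\ b = b')].

Variable L' : P -> P -> P.
Hypothesis mate : orthogonal_mate L'.

Definition mate_value (b : {set P}) : P := L' (pt p0 b G1) (pt p0 b G2).

Lemma mate_value_mem b : b \in Bl -> mate_value b \in G3.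
Proof.
move=> bBl; have [in3 _ _ _] := mate.
by apply: in3; [case: (pt_mem i1 bBl) | case: (pt_mem i2 bBl)].
Qed.

(* Blocks carrying the same mate symbol are disjoint or equal: rows and
   columns of a Latin square contain each symbol once, and orthogonality
   handles the third group. *)
Lemma mate_value_unique b b' p : b \in Bl -> b' \in Bl ->
  mate_value b = mate_value b' -> p \in b -> p \in b' -> b = b'.
Proof.
move=> bBl b'Bl; rewrite /mate_value => eL pb pb'.
have [_ rowI colI orth] := mate.
have [_ aG] := pt_mem i1 bBl; have [_ cG] := pt_mem i2 bBl.
have [_ aG'] := pt_mem i1 b'Bl; have [_ cG'] := pt_mem i2 b'Bl.
move: pb; rewrite {1}(td_block_points bBl) !inE => /orP[/orP[]|] /eqP pE.
- have e1 : pt p0 b G1 = pt p0 b' G1.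
    by rewrite -pE; apply: (pt_unique (i := i1)); rewrite // pE.
  by apply: td_block_cell => //; apply: (rowI _ _ _ aG cG cG'); rewrite eL e1.
- have e2 : pt p0 b G2 = pt p0 b' G2.
    by rewrite -pE; apply: (pt_unique (i := i2)); rewrite // pE.
  by apply: td_block_cell => //; apply: (colI _ _ _ aG aG' cG); rewrite eL e2.
- have e3 : pt p0 b' G3 = p.
    symmetry; apply: (pt_unique (i := i3)); rewrite // pE.
    by case: (pt_mem i3 bBl).
  have Bb : [set pt p0 b G1; pt p0 b G2; p] \in Bl.
    by rewrite pE -td_block_points.
  have Bb' : [set pt p0 b' G1; pt p0 b' G2; p] \in Bl.
    by rewrite -e3 -td_block_points.
  have [e1 e2] := orth _ _ _ _ _ aG aG' cG cG' Bb Bb' eL.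
  exact: td_block_cell.
Qed.

Lemma mate_value_cover s p : s \in G3 -> p \in G1 :|: G2 :|: G3 ->
  exists2 b, b \in Bl & p \in b /\ mate_value b = s.
Proof.
move=> sG pG; set Bp := [set b in Bl | p \in b].
have inj : {in Bp &, injective mate_value}.
  move=> b b'; rewrite !inE => /andP[bBl pb] /andP[b'Bl pb'] e.
  exact: mate_value_unique e pb pb'.
have cardBp : #|Bp| = T.
  move: pG; rewrite !inE => /orP[/orP[]|] pG.
  - exact: (blocks_through_card (i := i1) (j := i2)).
  - exact: (blocks_through_card (i := i2) (j := i1)).
  - exact: (blocks_through_card (i := i3) (j := i1)).
have image : mate_value @: Bp = G3.
  apply/eqP; rewrite eqEcard (card_in_imset inj) cardBp (td_group_card i3) leqnn andbT.
  by apply/subsetP => _ /imsetP[b /setIdP[bBl _] ->]; apply: mate_value_mem.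
move: sG; rewrite -image => /imsetP[b /setIdP[bBl pb] ->].
by exists b.
Qed.

End TransversalDesign.

Section Decomposition.
Variables (P : finType) (p0 : P) (n T : nat).
Variable grp : P -> 'rV['F_3]_n.
Variable Bx : 'rV['F_3]_n -> {set {set P}}.
Variable BL : {set 'rV['F_3]_n} -> {set {set P}}.
Variable B : {set {set P}}.
Local Notation G x := [set p | grp p == x].

Definition mated_line l x y z (L : P -> P -> P) : Prop :=
  [/\ l = [set x; y; z], x != y, x != z, y != z
    & orthogonal_mate (G x) (G y) (G z) (BL l) L].

Lemma mated_line_choice :
  (forall l, AG_line l -> exists x y z,
     [/\ l = [set x; y; z], x != y, x != z, y != z
       & has_orthogonal_mate (G x) (G y) (G z) (BL l)]) ->
  exists lx ly lz (L : {set 'rV['F_3]_n} -> P -> P -> P),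
    forall l, AG_line l -> mated_line l (lx l) (ly l) (lz l) (L l).
Proof.
move=> mates; have /fin_all_exists[m Hm] : forall l,
    exists m : 'rV_n * 'rV_n * 'rV_n * (P -> P -> P),
      AG_line l -> mated_line l m.1.1.1 m.1.1.2 m.1.2 m.2.
  move=> l; case Ll: (AG_line l); last by exists (0%R, 0%R, 0%R, fun a _ => a).
  by have [x [y [z [El xy xz yz [L HL]]]]] := mates l Ll; exists (x, y, z, L).
exists (fun l => (m l).1.1.1), (fun l => (m l).1.1.2), (fun l => (m l).1.2).
by exists (fun l => (m l).2).
Qed.

Variable Q : 'rV['F_3]_n -> {set {set {set P}}}.
Variables lx ly lz : {set 'rV['F_3]_n} -> 'rV['F_3]_n.
Variable mate : {set 'rV['F_3]_n} -> P -> P -> P.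

Hypothesis T_gt0 : 0 < T.
Hypothesis cardG : forall x, #|G x| = T.
Hypothesis subSTS : forall x, is_STS (G x) (Bx x).
Hypothesis subres : forall x, resolution (G x) (Bx x) (Q x).
Hypothesis line_data : forall l, AG_line l -> mated_line l (lx l) (ly l) (lz l) (mate l).
Hypothesis TD : forall l x y z, AG_line l -> l = [set x; y; z] ->
  x != y -> x != z -> y != z -> is_TD T (G x) (G y) (G z) (BL l).
Hypothesis B_def : B = (\bigcup_x Bx x) :|: (\bigcup_(l | AG_line l) BL l).

Lemma line_TD l : AG_line l -> is_TD T (G (lx l)) (G (ly l)) (G (lz l)) (BL l).
Proof. by move=> Ll; have [El nxy nxz nyz _] := line_data Ll; apply: TD. Qed.

Definition line_mate_value l b := mate_value p0 (G (lx l)) (G (ly l)) (mate l) b.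

Definition key (b : {set P}) : nat + ({set 'rV['F_3]_n} * nat) :=
  if [pick x | b \in Bx x] is Some x then inl (index (pblock (Q x) b) (enum (Q x)))
  else if [pick l | AG_line l && (b \in BL l)] is Some l then
    inr (direction l, index (line_mate_value l b) (enum (G (lz l))))
  else inl 0.

Lemma line_points_mem l : AG_line l -> [/\ lx l \in l, ly l \in l & lz l \in l].
Proof.
case/line_data=> El _ _ _ _; set l3 := [set lx l; ly l; lz l] in El.
suff : [/\ lx l \in l3, ly l \in l3 & lz l \in l3] by rewrite -El.
by rewrite !inE !eqxx ?orbT.
Qed.

Lemma sub_block_group x b p : b \in Bx x -> p \in b -> grp p = x.
Proof.
move=> bx pb; have [/(_ b bx)[/subsetP sb _] _] := subSTS x.
by move: (sb p pb); rewrite inE => /eqP.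
Qed.

Lemma line_block_groups l b : AG_line l -> b \in BL l -> grp @: b = l.
Proof.
move=> Ll bl; have TDl := line_TD Ll; have [El _ _ _ _] := line_data Ll.
have [_ aG] := pt_mem p0 TDl (@Ordinal 3 0 isT) bl.
have [_ cG] := pt_mem p0 TDl (@Ordinal 3 1 isT) bl.
have [_ eG] := pt_mem p0 TDl (@Ordinal 3 2 isT) bl.
rewrite (td_block_points p0 TDl bl) !imsetU !imset_set1 [RHS]El.
by move: aG cG eG; rewrite /td_group /= !inE => /eqP-> /eqP-> /eqP->.
Qed.

Lemma line_block_not_sub l b x : AG_line l -> b \in BL l -> b \notin Bx x.
Proof.
move=> Ll bl; apply/negP => bx; have [_ nxy _ _ _] := line_data Ll.
have [xl yl _] := line_points_mem Ll.
have /imsetP[u ub eu] : lx l \in grp @: b by rewrite (line_block_groups Ll bl).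
have /imsetP[v vb ev] : ly l \in grp @: b by rewrite (line_block_groups Ll bl).
by move: nxy; rewrite eu ev (sub_block_group bx ub) (sub_block_group bx vb) eqxx.
Qed.

Lemma key_sub x b : b \in Bx x -> key b = inl (index (pblock (Q x) b) (enum (Q x))).
Proof.
move=> bx; rewrite /key; case: pickP => [x' bx' | /(_ x)]; last by rewrite bx.
have [/(_ b bx)[_ cb] _] := subSTS x.
have /card_gt0P[p pb] : 0 < #|b| by rewrite cb.
by rewrite -(sub_block_group bx' pb) (sub_block_group bx pb).
Qed.

Lemma key_line l b : AG_line l -> b \in BL l ->
  key b = inr (direction l, index (line_mate_value l b) (enum (G (lz l)))).
Proof.
move=> Ll bl; rewrite /key; case: pickP => [x bx | _].
  by have := line_block_not_sub x Ll bl; rewrite bx.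
case: pickP => [l' /andP[Ll' bl'] | /(_ l)]; last by rewrite Ll bl.
by rewrite -(line_block_groups Ll' bl') (line_block_groups Ll bl).
Qed.

Lemma blockP b : b \in B -> (exists x, b \in Bx x) \/ (exists2 l, AG_line l & b \in BL l).
Proof.
rewrite B_def inE => /orP[/bigcupP[x _ bx] | /bigcupP[l Ll bl]]; first by left; exists x.
by right; exists l.
Qed.

Lemma sub_block_mem x b : b \in Bx x -> b \in B.
Proof. by move=> bx; rewrite B_def inE; apply/orP; left; apply/bigcupP; exists x. Qed.

Lemma line_block_mem l b : AG_line l -> b \in BL l -> b \in B.
Proof. by move=> Ll bl; rewrite B_def inE; apply/orP; right; apply/bigcupP; exists l. Qed.

Lemma sub_classes_card x : #|Q x| * 2 = T - 1.
Proof.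
have /card_gt0P[q qG] : 0 < #|G x| by rewrite cardG.
by rewrite (resolution_card (subSTS x) (subres x) qG) cardG.
Qed.

Lemma sub_label_cover x1 b0 p : b0 \in Bx x1 ->
  exists2 b, b \in B & key b = key b0 /\ p \in b.
Proof.
move=> b0x1; rewrite (key_sub b0x1); set x := grp p.
have /andP[partQ1 _] := subres x1; have /andP[partQ /forall_inP classQ] := subres x.
have j_lt : index (pblock (Q x1) b0) (enum (Q x1)) < #|Q x|.
  have -> : #|Q x| = #|Q x1|.
    by apply/eqP; rewrite -(eqn_pmul2r (isT : 0 < 2)) !sub_classes_card.
  by rewrite cardE index_mem mem_enum pblock_mem // (cover_partition partQ1).
move: (index _ _) j_lt => j j_lt; set C := nth set0 (enum (Q x)) j.
have CQ : C \in Q x by rewrite -mem_enum mem_nth // -cardE.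
have /andP[sC partC] := classQ C CQ.
have : p \in cover C by rewrite (cover_partition partC) inE.
case/bigcupP=> b bC pb; have bx : b \in Bx x := subsetP sC b bC.
exists b; first exact: sub_block_mem bx.
split=> //; rewrite (key_sub bx); congr inl; have /and3P[_ tQ _] := partQ.
by rewrite (def_pblock tQ CQ bC) /C index_uniq ?enum_uniq // -cardE.
Qed.

Lemma line_label_cover l1 b0 p : AG_line l1 -> b0 \in BL l1 ->
  exists2 b, b \in B & key b = key b0 /\ p \in b.
Proof.
move=> Ll1 bl1; rewrite (key_line Ll1 bl1).
have i_lt : index (line_mate_value l1 b0) (enum (G (lz l1))) < T.
  have [_ _ _ _ mate1] := line_data Ll1.
  by rewrite -(cardG (lz l1)) cardE index_mem mem_enum (mate_value_mem p0 (line_TD Ll1)).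
move: (index _ _) i_lt => i i_lt; set l := translate (grp p) (direction l1).
have [Ll dir_l pl] := parallel_line (grp p) Ll1; have [El _ _ _ matel] := line_data Ll.
set s := nth p0 (enum (G (lz l))) i.
have sG : s \in G (lz l) by rewrite -mem_enum mem_nth // -cardE cardG.
have pG : p \in G (lx l) :|: G (ly l) :|: G (lz l).
  have : grp p \in [set lx l; ly l; lz l] by rewrite -El.
  by rewrite !inE.
have [b bl [pb bs]] := mate_value_cover p0 (line_TD Ll) matel sG pG.
exists b; first exact: line_block_mem Ll bl.
split=> //; rewrite (key_line Ll bl) dir_l /line_mate_value bs.
by rewrite /s index_uniq ?enum_uniq // -cardE cardG.
Qed.

Lemma key_cover b0 p : b0 \in B -> exists2 b, b \in B & key b = key b0 /\ p \in b.
Proof.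
case/blockP=> [[x b0x] | [l Ll b0l]]; first exact: sub_label_cover b0x.
exact: line_label_cover b0l.
Qed.

(* Two blocks of sub-systems with the same label that share a point p lie in
   the same sub-system (that of p) and in the same class of its resolution. *)
Lemma sub_label_unique x x' b b' p : b \in Bx x -> b' \in Bx x' ->
  key b = key b' -> p \in b -> p \in b' -> b = b'.
Proof.
move=> bx bx' + pb pb'.
have ex := sub_block_group bx pb; have ex' := sub_block_group bx' pb'; subst x x'.
set y := grp p in bx bx' *; rewrite (key_sub bx) (key_sub bx') => -[eidx].
have /andP[partQ /forall_inP classQ] := subres y.
have coverQ c : c \in Bx y -> c \in cover (Q y) by rewrite (cover_partition partQ).
have eC : pblock (Q y) b = pblock (Q y) b'.
  by apply: (index_inj set0) eidx; rewrite mem_enum pblock_mem ?coverQ.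
have /andP[_ /and3P[_ tC _]] := classQ _ (pblock_mem (coverQ b bx)).
apply: (trivIset_meet tC _ _ pb pb'); first by rewrite mem_pblock coverQ.
by rewrite eC mem_pblock coverQ.
Qed.

(* Two line blocks with the same label that share a point lie on parallel
   lines through the same point, hence on the same line, and carry the same
   mate symbol there. *)
Lemma line_label_unique l l' b b' p : AG_line l -> AG_line l' ->
  b \in BL l -> b' \in BL l' -> key b = key b' -> p \in b -> p \in b' -> b = b'.
Proof.
move=> Ll Ll' bl bl'; rewrite (key_line Ll bl) (key_line Ll' bl') => -[edir eidx] pb pb'.
have pl : grp p \in l by rewrite -(line_block_groups Ll bl) imset_f.
have pl' : grp p \in l' by rewrite -(line_block_groups Ll' bl') imset_f.
have ell' := parallel_lines_eq Ll Ll' edir pl pl'; subst l'.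
have [_ _ _ _ matel] := line_data Ll; have TDl := line_TD Ll.
apply: (mate_value_unique TDl matel bl bl' _ pb pb').
by apply: (index_inj p0) eidx; rewrite mem_enum (mate_value_mem p0 TDl).
Qed.

Lemma key_unique b b' p : b \in B -> b' \in B -> key b = key b' ->
  p \in b -> p \in b' -> b = b'.
Proof.
case/blockP=> [[x bx] | [l Ll bl]]; case/blockP=> [[x' bx'] | [l' Ll' bl']].
- exact: sub_label_unique bx bx'.
- by rewrite (key_sub bx) (key_line Ll' bl').
- by rewrite (key_line Ll bl) (key_sub bx').
- exact: line_label_unique Ll Ll' bl bl'.
Qed.

Lemma block_neq0 b : b \in B -> b != set0.
Proof.
case/blockP=> [[x bx] | [l Ll bl]].
  by have [/(_ b bx)[_ cb] _] := subSTS x; rewrite -card_gt0 cb.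
have [pb _] := pt_mem p0 (line_TD Ll) (@Ordinal 3 0 isT) bl.
by apply/set0Pn; exists (pt p0 b (G (lx l))).
Qed.

Theorem decomposition_resolution : resolution [set: P] B (preim_partition key B).
Proof. exact: labelling_resolution block_neq0 key_cover key_unique. Qed.

End Decomposition.

Unset Implicit Arguments. Set Strict Implicit.
Theorem theorem3p7 (k r : nat) (P : finType) (B : {set {set P}})
  (* decomposition data: group label of each point, and the sub-block-sets *)
  (grp : P -> 'rV['F_3]_(r.-1))
  (Bx : 'rV['F_3]_(r.-1) -> {set {set P}})
  (BL : {set 'rV['F_3]_(r.-1)} -> {set {set P}}) :
  2 <= k -> 2 <= r -> r <= k ->
  #|[set: P]| = 3 ^ k ->
  is_STS [set: P] B ->
  three_rank B <= 3 ^ k - r ->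
  (* the decomposition of the standing setup *)
  (forall x, #|[set p | grp p == x]| = 3 ^ (k - r + 1)) ->
  (forall x, is_STS [set p | grp p == x] (Bx x)) ->
  (forall l x y z, AG_line l -> l = [set x; y; z] ->
     x != y -> x != z -> y != z ->
     is_TD (3 ^ (k - r + 1)) [set p | grp p == x] [set p | grp p == y]
           [set p | grp p == z] (BL l)) ->
  B = (\bigcup_x Bx x) :|: (\bigcup_(l | AG_line l) BL l) ->
  (* (i) every sub-STS is resolvable *)
  (forall x, resolvable [set p | grp p == x] (Bx x)) ->
  (* (ii) every Latin square of a line has an orthogonal mate *)
  (forall l, AG_line l -> exists x y z,
     [/\ l = [set x; y; z], x != y, x != z, y != z &
         has_orthogonal_mate [set p | grp p == x] [set p | grp p == y]
           [set p | grp p == z] (BL l)]) ->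
  exists Q, resolution [set: P] B Q /\ #|Q| = (3 ^ k - 1) %/ 2.
Proof.
move=> _ _ _ cardP STS _ cardG subSTS TD B_def subres mates.
have [p0 _] : exists p0 : P, p0 \in [set: P] by apply/card_gt0P; rewrite cardP expn_gt0.
have T_gt0 : 0 < 3 ^ (k - r + 1) by rewrite expn_gt0.
have [Q HQ] := fin_all_exists subres.
have [lx [ly [lz [mate Hmate]]]] := mated_line_choice mates.
have res := decomposition_resolution p0 T_gt0 cardG subSTS HQ Hmate TD B_def.
exists (preim_partition (key p0 grp Bx BL Q lx ly lz mate) B); split=> //.
by rewrite -cardP -(resolution_card STS res (in_setT p0)) mulnK.
Qed.
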